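(* Let $Q$ be a countable weak-latin quandle and $<$ a right order on $Q$. Then there is an injective quandle homomorphism $\rho:Q\hookrightarrow\mathrm{Conj}(\mathrm{Homeo}_+(\mathbb{R}))$, i.e. an injective map with $\rho(r*s)=\rho(s)\circ\rho(r)\circ\rho(s)^{-1}$ for all $r,s\in Q$.
   Context: Quandle: set $Q$ with operation $*$ satisfying $q*q=q$, unique right division, and $(q*r)*s=(q*s)*(r*s)$. Weak-latin: for any $q,r\in Q$ there exists $\hat q\in Q$ such that $\hat q*q=\hat q*r$ implies $q=r$. A right order is a total order $<$ on $Q$ with $q_1<q_2\Rightarrow q_1*q<q_2*q$ for all $q$. Homeomorphisms act on the right; $\mathrm{Conj}(\mathrm{Homeo}_+(\mathbb{R}))$ is the quandle structure $f*g=g\circ f\circ g^{-1}$ on $\mathrm{Homeo}_+(\mathbb{R})$. *)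

From Stdlib Require Import Reals.
Open Scope R_scope.

Record quandle := Quandle {
  qcar :> Type;
  qop : qcar -> qcar -> qcar;
  qidem : forall q : qcar, qop q q = q;
  qrdiv : forall r q : qcar, exists! p : qcar, qop p r = q;
  qrdist : forall q r s : qcar, qop (qop q r) s = qop (qop q s) (qop r s)
}.

Definition weak_latin (Q : quandle) : Prop :=
  forall q r : Q, exists qh : Q, qop Q qh q = qop Q qh r -> q = r.

Definition countable (T : Type) : Prop :=
  exists f : T -> nat, forall x y, f x = f y -> x = y.

Definition right_order (Q : quandle) (lt : Q -> Q -> Prop) : Prop :=
  (forall q, ~ lt q q) /\
  (forall a b c, lt a b -> lt b c -> lt a c) /\
  (forall a b, lt a b \/ a = b \/ lt b a) /\
  (forall q1 q2 q, lt q1 q2 -> lt (qop Q q1 q) (qop Q q2 q)).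

Record homeo_plus := HomeoPlus {
  hfun :> R -> R;
  hinv : R -> R;
  hfun_cont : continuity hfun;
  hinv_cont : continuity hinv;
  hinvK : forall x, hinv (hfun x) = x;
  hfunK : forall x, hfun (hinv x) = x;
  hfun_incr : forall x y, x < y -> hfun x < hfun y
}.

From Stdlib Require Import Reals Lra Lia List Classical ClassicalEpsilon
  FunctionalExtensionality Permutation FinFun.
Import ListNotations.
Open Scope R_scope.

(* Dynamical realization.  Give each q the weight w q = 2^-(e q), where e enumerates Q, and
   blow q up to the interval [a q, a q + w q] of [0, W], where a q is the total weight of the
   points below q and W the total weight.  An order automorphism g of (Q, <) then acts on R by
   mapping [a q, a q + w q] affinely onto [a (g q), a (g q) + w (g q)] and fixing everything
   outside [0, W].  Written as a sum over q this map is visibly nondecreasing, and reindexing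
   the sum gives lift g o lift h = lift (g o h).  As the intervals have disjoint interiors and
   total length W, lift id is the identity, so each lift g is an increasing bijection of R,
   hence a homeomorphism, and g is recovered from lift g on the points a q.  For a right
   order the right translations q |-> q * s are order automorphisms; right distributivity
   says that the translation by r * s is the conjugate of the one by r by the one by s, and
   weak latinity makes s |-> (q |-> q * s) injective. *)

Definition lsum {A : Type} (v : A -> R) (l : list A) : R :=
  fold_right (fun a s => v a + s) 0 l.

Lemma lsum_map {A B : Type} (f : A -> B) v l : lsum (fun a => v (f a)) l = lsum v (map f l).
Proof. induction l; simpl; congruence. Qed.

Section UnorderedSums.
Variable A : Type.
Implicit Types (u v : A -> R) (l : list A).

Lemma lsum_add u v l : lsum (fun a => u a + v a) l = lsum u l + lsum v l.
Proof. induction l; simpl; [lra | rewrite IHl; lra]. Qed.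

Lemma lsum_le u v l : (forall a, In a l -> u a <= v a) -> lsum u l <= lsum v l.
Proof.
  induction l as [|b l IH]; simpl; intros Huv; [lra|].
  assert (u b <= v b) by auto.
  assert (lsum u l <= lsum v l) by auto.
  lra.
Qed.

Lemma lsum_eq0 v l : (forall a, In a l -> v a = 0) -> lsum v l = 0.
Proof. induction l; simpl; intros Hv; [lra|]. rewrite Hv, IHl; auto; lra. Qed.

Lemma lsum_perm v l l' : Permutation l l' -> lsum v l = lsum v l'.
Proof. induction 1; simpl; lra. Qed.

Lemma lsum_incl v l l' :
  (forall a, 0 <= v a) -> NoDup l -> incl l l' -> lsum v l <= lsum v l'.
Proof.
  intros Hv. revert l. induction l' as [|b l' IH]; intros l Hl Hincl.
  - destruct l as [|c l]; [simpl; lra|]. destruct (Hincl c); simpl; auto.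
  - destruct (classic (In b l)) as [Hb|Hb].
    + destruct (in_split _ _ Hb) as [l1 [l2 ->]].
      rewrite (lsum_perm v _ (b :: l1 ++ l2)) by (symmetry; apply Permutation_middle).
      apply NoDup_remove in Hl as [Hl Hnotin]. simpl.
      enough (lsum v (l1 ++ l2) <= lsum v l') by lra.
      apply IH; auto. intros c Hc.
      destruct (Hincl c) as [<-|]; [|contradiction|auto].
      apply in_app_or in Hc as [|]; apply in_or_app; simpl; auto.
    + simpl. enough (lsum v l <= lsum v l') by (specialize (Hv b); lra).
      apply IH; auto. intros c Hc. destruct (Hincl c Hc) as [<-|]; tauto.
Qed.

Definition summable (v : A -> R) : Prop :=
  exists B, forall l, NoDup l -> lsum v l <= B.

Definition finite_sums (v : A -> R) (y : R) : Prop :=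
  exists l, NoDup l /\ y = lsum v l.

Lemma summable_bound v : summable v -> bound (finite_sums v).
Proof. intros [B HB]. exists B. intros y [l [Hl ->]]. auto. Qed.

Lemma finite_sums_nil v : exists y, finite_sums v y.
Proof. exists 0, []. split; [constructor | reflexivity]. Qed.

(* Junk value [0] when the finite sums are unbounded. *)
Definition tsum (v : A -> R) : R :=
  match excluded_middle_informative (summable v) with
  | left Hv => proj1_sig (completeness _ (summable_bound v Hv) (finite_sums_nil v))
  | right _ => 0
  end.

Lemma tsum_lub v : summable v -> is_lub (finite_sums v) (tsum v).
Proof.
  intros Hv. unfold tsum.
  destruct (excluded_middle_informative _); [exact (proj2_sig _) | contradiction].
Qed.

Lemma lsum_le_tsum v l : summable v -> NoDup l -> lsum v l <= tsum v.
Proof. intros Hv Hl. apply (tsum_lub v Hv). exists l; auto. Qed.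

Lemma tsum_le v B : (forall l, NoDup l -> lsum v l <= B) -> tsum v <= B.
Proof.
  intros HB. assert (Hv : summable v) by (exists B; auto).
  apply (tsum_lub v Hv). intros y [l [Hl ->]]. auto.
Qed.

Lemma tsum_ge0 v : summable v -> 0 <= tsum v.
Proof. intros Hv. apply (lsum_le_tsum v [] Hv). constructor. Qed.

Lemma tsum_eq0 v : (forall a, v a = 0) -> tsum v = 0.
Proof.
  intros Hv. apply Rle_antisym.
  - apply tsum_le. intros l _. rewrite lsum_eq0; auto. lra.
  - apply tsum_ge0. exists 0. intros l _. rewrite lsum_eq0; auto. lra.
Qed.

Lemma summable_le u v : (forall a, 0 <= v a <= u a) -> summable u -> summable v.
Proof.
  intros Hvu [B HB]. exists B. intros l Hl.
  apply Rle_trans with (lsum u l); auto. apply lsum_le. intros; apply Hvu.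
Qed.

Lemma tsum_le_tsum u v : (forall a, 0 <= v a <= u a) -> summable u -> tsum v <= tsum u.
Proof.
  intros Hvu Hu. apply tsum_le. intros l Hl.
  apply Rle_trans with (lsum u l); [|apply lsum_le_tsum; auto].
  apply lsum_le. intros; apply Hvu.
Qed.

Lemma summable_add u v : summable u -> summable v -> summable (fun a => u a + v a).
Proof.
  intros [Bu Hu] [Bv Hv]. exists (Bu + Bv). intros l Hl. rewrite lsum_add.
  specialize (Hu l Hl). specialize (Hv l Hl). lra.
Qed.

Lemma tsum_add u v : (forall a, 0 <= u a) -> (forall a, 0 <= v a) ->
  summable u -> summable v -> tsum (fun a => u a + v a) = tsum u + tsum v.
Proof.
  intros Hu0 Hv0 Hu Hv. apply Rle_antisym.
  - apply tsum_le. intros l Hl. rewrite lsum_add.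
    pose proof (lsum_le_tsum u l Hu Hl). pose proof (lsum_le_tsum v l Hv Hl). lra.
  -     enough (tsum u <= tsum (fun a => u a + v a) - tsum v) by lra.
    apply tsum_le. intros l1 Hl1.
    enough (tsum v <= tsum (fun a => u a + v a) - lsum u l1) by lra.
    apply tsum_le. intros l2 Hl2.
    set (dec := fun x y : A => excluded_middle_informative (x = y)).
    set (L := nodup dec (l1 ++ l2)).
    assert (HL : NoDup L) by apply NoDup_nodup.
    assert (lsum u l1 <= lsum u L).
    { apply lsum_incl; auto. intros x Hx. apply nodup_In, in_or_app; auto. }
    assert (lsum v l2 <= lsum v L).
    { apply lsum_incl; auto. intros x Hx. apply nodup_In, in_or_app; auto. }
    pose proof (lsum_le_tsum _ L (summable_add u v Hu Hv) HL) as HuvL.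
    rewrite lsum_add in HuvL. lra.
Qed.

Lemma NoDup_map_cancel (g gi : A -> A) l :
  (forall a, gi (g a) = a) -> NoDup l -> NoDup (map g l).
Proof.
  intros Hg. apply Injective_map_NoDup. intros x y E. rewrite <- (Hg x), <- (Hg y), E. auto.
Qed.

Lemma summable_comp v (g gi : A -> A) :
  (forall a, gi (g a) = a) -> summable v -> summable (fun a => v (g a)).
Proof.
  intros Hg [B HB]. exists B. intros l Hl. rewrite lsum_map. apply HB.
  apply (NoDup_map_cancel g gi); auto.
Qed.

Lemma tsum_comp_le v (g gi : A -> A) :
  (forall a, gi (g a) = a) -> summable v -> tsum (fun a => v (g a)) <= tsum v.
Proof.
  intros Hg Hv. apply tsum_le. intros l Hl. rewrite lsum_map.
  apply lsum_le_tsum; auto. apply (NoDup_map_cancel g gi); auto.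
Qed.

Lemma tsum_comp v (g gi : A -> A) :
  (forall a, g (gi a) = a) -> (forall a, gi (g a) = a) -> summable v ->
  tsum (fun a => v (g a)) = tsum v.
Proof.
  intros Hgi Hg Hv. apply Rle_antisym; [apply (tsum_comp_le v g gi); auto|].
  replace (tsum v) with (tsum (fun a => v (g (gi a)))).
  - apply (tsum_comp_le (fun a => v (g a)) gi g); auto. apply (summable_comp v g gi); auto.
  - f_equal. apply functional_extensionality. intros a. rewrite Hgi. auto.
Qed.

Definition restrict (P : A -> Prop) (v : A -> R) (a : A) : R :=
  if excluded_middle_informative (P a) then v a else 0.

Lemma restrict_in P v a : P a -> restrict P v a = v a.
Proof. unfold restrict. destruct (excluded_middle_informative _); tauto. Qed.

Lemma restrict_out P v a : ~ P a -> restrict P v a = 0.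
Proof. unfold restrict. destruct (excluded_middle_informative _); tauto. Qed.

Lemma restrict_bounds P v a : 0 <= v a -> 0 <= restrict P v a <= v a.
Proof. unfold restrict. destruct (excluded_middle_informative _); lra. Qed.

Lemma summable_restrict P v : (forall a, 0 <= v a) -> summable v -> summable (restrict P v).
Proof. intros Hv0. apply summable_le. intros a. apply restrict_bounds, Hv0. Qed.

Definition single (p : A) (c : R) (a : A) : R :=
  if excluded_middle_informative (a = p) then c else 0.

Lemma single_at p c : single p c p = c.
Proof. unfold single. destruct (excluded_middle_informative _); tauto. Qed.

Lemma single_off p c a : a <> p -> single p c a = 0.
Proof. unfold single. destruct (excluded_middle_informative _); tauto. Qed.

Lemma single_ge0 p c a : 0 <= c -> 0 <= single p c a.
Proof. unfold single. destruct (excluded_middle_informative _); lra. Qed.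

Lemma lsum_single_le p c l : NoDup l -> 0 <= c -> lsum (single p c) l <= c.
Proof.
  induction 1 as [|b l Hb Hl IH]; intros Hc; simpl; [lra|].
  destruct (classic (b = p)) as [->|Hbp].
  - rewrite single_at, lsum_eq0; [lra|].
    intros a Ha. apply single_off. intros ->. contradiction.
  - rewrite single_off by auto. specialize (IH Hc). lra.
Qed.

Lemma summable_single p c : 0 <= c -> summable (single p c).
Proof. intros Hc. exists c. intros l Hl. apply lsum_single_le; auto. Qed.

Lemma tsum_single p c : 0 <= c -> tsum (single p c) = c.
Proof.
  intros Hc. apply Rle_antisym.
  - apply tsum_le. intros l Hl. apply lsum_single_le; auto.
  - assert (Hp : NoDup [p]) by (repeat constructor; auto).
    pose proof (lsum_le_tsum (single p c) [p] (summable_single p c Hc) Hp) as Hsum.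
    simpl in Hsum. rewrite single_at in Hsum. lra.
Qed.

Lemma tsum_restrict_add_le P v u p :
  (forall a, 0 <= v a) -> (forall a, 0 <= u a) -> summable v -> summable u ->
  ~ P p -> (forall a, P a \/ a = p -> v a <= u a) ->
  tsum (restrict P v) + v p <= tsum u.
Proof.
  intros Hv0 Hu0 Hv Hu Hp Hvu.
  rewrite <- (tsum_single p (v p)) by auto.
  rewrite <- tsum_add; auto using summable_restrict, summable_single, single_ge0.
  - apply tsum_le_tsum; auto. intros a. split.
    + pose proof (restrict_bounds P v a (Hv0 a)). pose proof (single_ge0 p (v p) a (Hv0 p)). lra.
    + destruct (classic (a = p)) as [->|Hap].
      * rewrite restrict_out, single_at by auto. rewrite Rplus_0_l. auto.
      * rewrite single_off by auto. destruct (classic (P a)).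
        -- rewrite restrict_in by auto. rewrite Rplus_0_r. auto.
        -- rewrite restrict_out by auto. rewrite Rplus_0_r. auto.
  - intros a. apply restrict_bounds, Hv0.
Qed.

End UnorderedSums.

Arguments summable {A}. Arguments tsum {A}.
Arguments restrict {A}. Arguments single {A}.

Lemma lsum_pow_half_seq k M :
  lsum (fun n => (/2)^n) (seq k M) = 2 * ((/2)^k - (/2)^(k + M)).
Proof.
  revert k. induction M as [|M IH]; intros k; simpl.
  - rewrite Nat.add_0_r. lra.
  - rewrite IH. replace (k + S M)%nat with (S k + M)%nat by lia. simpl. lra.
Qed.

Lemma lsum_pow_half_le l : NoDup l -> lsum (fun n => (/2)^n) l <= 2.
Proof.
  intros Hl. set (M := S (list_max l)).
  apply Rle_trans with (lsum (fun n => (/2)^n) (seq 0 M)).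
  - apply lsum_incl; auto.
    + intros n. left. apply pow_lt. lra.
    + intros n Hn. apply in_seq.
      pose proof (proj1 (list_max_le l (list_max l)) (le_n _)) as Hmax.
      rewrite Forall_forall in Hmax. specialize (Hmax n Hn). unfold M. lia.
  - rewrite lsum_pow_half_seq. assert (0 < (/2)^(0 + M)) by (apply pow_lt; lra). simpl in *. lra.
Qed.

Section OrderAutomorphisms.
Variable T : Type.
Variable lt : T -> T -> Prop.
Hypothesis lt_irrefl : forall q, ~ lt q q.
Hypothesis lt_trans : forall p q r, lt p q -> lt q r -> lt p r.
Hypothesis lt_total : forall p q, lt p q \/ p = q \/ lt q p.

Definition order_aut (g gi : T -> T) : Prop :=
  (forall q, g (gi q) = q) /\ (forall q, gi (g q) = q) /\
  (forall p q, lt p q -> lt (g p) (g q)).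

Lemma order_aut_inv g gi : order_aut g gi -> order_aut gi g.
Proof.
  intros [Hggi [Hgig Hg]]. split; [|split]; auto.
  intros p q Hpq. destruct (lt_total (gi p) (gi q)) as [|[E|E]]; auto; exfalso.
  - apply (f_equal g) in E. rewrite !Hggi in E. subst. eapply lt_irrefl; eauto.
  - apply Hg in E. rewrite !Hggi in E. eapply lt_irrefl; eauto.
Qed.

Lemma order_aut_reflect g gi p q : order_aut g gi -> lt (g p) (g q) -> lt p q.
Proof.
  intros Hg Hgpq. destruct (order_aut_inv g gi Hg) as [Hgig [_ Hgi]].
  apply Hgi in Hgpq. rewrite !Hgig in Hgpq. auto.
Qed.

Lemma order_aut_comp g gi h hi :
  order_aut g gi -> order_aut h hi -> order_aut (fun q => g (h q)) (fun q => hi (gi q)).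
Proof.
  intros [G1 [G2 G3]] [H1 [H2 H3]]. split; [|split]; intros.
  - rewrite H1, G1. auto.
  - rewrite G2, H2. auto.
  - auto.
Qed.

Lemma order_aut_id : order_aut (fun q => q) (fun q => q).
Proof. split; [|split]; auto. Qed.

End OrderAutomorphisms.
Arguments order_aut {T}.

Lemma increasing_bijection_continuous (f fi : R -> R) :
  (forall x, fi (f x) = x) -> (forall x, f (fi x) = x) ->
  (forall x y, x < y -> f x < f y) -> (forall x y, x < y -> fi x < fi y) -> continuity f.
Proof.
  intros Hfif Hffi Hf Hfi x eps Heps. simpl. unfold R_dist.
  set (lo := fi (f x - eps)). set (hi := fi (f x + eps)).
  assert (lo < x) by (unfold lo; rewrite <- (Hfif x) at 2; apply Hfi; lra).
  assert (x < hi) by (unfold hi; rewrite <- (Hfif x) at 1; apply Hfi; lra).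
  exists (Rmin (x - lo) (hi - x)). split; [apply Rmin_glb_lt; lra|].
  intros y [_ Hy]. pose proof (Rmin_l (x - lo) (hi - x)). pose proof (Rmin_r (x - lo) (hi - x)).
  apply Rabs_def2 in Hy as [Hy1 Hy2].
  assert (f lo < f y) by (apply Hf; lra). assert (f y < f hi) by (apply Hf; lra).
  unfold lo, hi in *. rewrite !Hffi in *. apply Rabs_def1; lra.
Qed.

Section Realization.
Variable T : Type.
Variable lt : T -> T -> Prop.
Hypothesis lt_irrefl : forall q, ~ lt q q.
Hypothesis lt_trans : forall p q r, lt p q -> lt q r -> lt p r.
Hypothesis lt_total : forall p q, lt p q \/ p = q \/ lt q p.
Variable e : T -> nat.
Hypothesis e_inj : forall p q, e p = e q -> p = q.

Definition w (q : T) : R := (/2)^(e q).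

Definition W : R := tsum w.

Definition a (q : T) : R := tsum (restrict (fun p => lt p q) w).

Lemma w_pos q : 0 < w q.
Proof. apply pow_lt. lra. Qed.

Lemma w_ge0 q : 0 <= w q.
Proof. left. apply w_pos. Qed.

Lemma summable_w : summable w.
Proof.
  exists 2. intros l Hl. unfold w. rewrite (lsum_map e (fun n => (/2)^n)).
  apply lsum_pow_half_le, Injective_map_NoDup; auto.
Qed.

Lemma W_ge0 : 0 <= W.
Proof. apply tsum_ge0, summable_w. Qed.

Lemma summable_restrict_w P : summable (restrict P w).
Proof. apply summable_restrict; [apply w_ge0 | apply summable_w]. Qed.

Lemma a_ge0 q : 0 <= a q.
Proof. apply tsum_ge0, summable_restrict_w. Qed.

Lemma a_add_w_le p q : lt p q -> a p + w p <= a q.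
Proof.
  intros Hpq. apply tsum_restrict_add_le; auto using w_ge0, summable_w, summable_restrict_w.
  - intros r. apply restrict_bounds, w_ge0.
  - intros r Hr. rewrite restrict_in; [lra|]. destruct Hr as [Hr | ->]; eauto.
Qed.

Lemma a_add_w_le_W q : a q + w q <= W.
Proof.
  apply tsum_restrict_add_le; auto using w_ge0, summable_w. intros r _. lra.
Qed.

Lemma a_inj p q : a p = a q -> p = q.
Proof.
  intros E. destruct (lt_total p q) as [Hpq|[|Hqp]]; auto;
    [pose proof (a_add_w_le p q Hpq) | pose proof (a_add_w_le q p Hqp)];
    pose proof (w_pos p); pose proof (w_pos q); lra.
Qed.

Definition phi (q : T) (x : R) : R := Rmax 0 (Rmin (w q) (x - a q)) / w q.

Ltac clamp_cases := unfold Rmax, Rmin; repeat destruct Rle_dec; lra.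

Lemma w_mul_phi q x : w q * phi q x = Rmax 0 (Rmin (w q) (x - a q)).
Proof. unfold phi. field. apply Rgt_not_eq, w_pos. Qed.

Lemma phi_left q x : x <= a q -> phi q x = 0.
Proof.
  intros Hx. unfold phi. replace (Rmax 0 (Rmin (w q) (x - a q))) with 0.
  - unfold Rdiv. ring.
  - pose proof (w_pos q). clamp_cases.
Qed.

Lemma phi_right q x : a q + w q <= x -> phi q x = 1.
Proof.
  intros Hx. pose proof (w_pos q). unfold phi.
  replace (Rmax 0 (Rmin (w q) (x - a q))) with (w q) by clamp_cases.
  field. lra.
Qed.

Lemma phi_mid q x : a q <= x <= a q + w q -> phi q x = (x - a q) / w q.
Proof.
  intros Hx. pose proof (w_pos q). unfold phi. f_equal. clamp_cases.
Qed.

Lemma phi_bounds q x : 0 <= phi q x <= 1.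
Proof.
  pose proof (w_pos q). pose proof (w_mul_phi q x).
  assert (0 <= Rmax 0 (Rmin (w q) (x - a q)) <= w q) by clamp_cases. nra.
Qed.

Lemma phi_mono q x y : x <= y -> phi q x <= phi q y.
Proof.
  intros Hxy. pose proof (w_pos q). pose proof (w_mul_phi q x). pose proof (w_mul_phi q y).
  assert (Rmax 0 (Rmin (w q) (x - a q)) <= Rmax 0 (Rmin (w q) (y - a q))) by clamp_cases.
  nra.
Qed.

Lemma w_mul_phi_sub_le q x y : x <= y -> w q * (phi q y - phi q x) <= y - x.
Proof.
  intros Hxy. rewrite Rmult_minus_distr_l, !w_mul_phi. pose proof (w_pos q). clamp_cases.
Qed.

Lemma phi_off p q x : p <> q -> a q <= x <= a q + w q -> phi p x = phi p (a q).
Proof.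
  intros Hpq Hx. pose proof (w_pos q).
  destruct (lt_total p q) as [Hlt|[E|Hlt]]; [|contradiction|].
  - pose proof (a_add_w_le p q Hlt). rewrite !phi_right; lra.
  - pose proof (a_add_w_le q p Hlt). rewrite !phi_left; lra.
Qed.

Definition lift_sum (g : T -> T) (x : R) : R := tsum (fun q => w (g q) * phi q x).

(* The clamps make [lift g] the identity outside [0, W], where the sum is [0], resp. [W]. *)
Definition lift (g : T -> T) (x : R) : R := lift_sum g x + Rmin x 0 + Rmax (x - W) 0.

Lemma lift_in g x : 0 <= x <= W -> lift g x = lift_sum g x.
Proof. intros Hx. unfold lift. rewrite Rmin_right, Rmax_right; lra. Qed.

Section Automorphism.
Variables g gi : T -> T.
Hypothesis g_aut : order_aut lt g gi.

Lemma summable_w_aut : summable (fun q => w (g q)).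
Proof. destruct g_aut as [_ [Hgig _]]. apply (summable_comp _ w g gi Hgig summable_w). Qed.

Lemma tsum_w_aut : tsum (fun q => w (g q)) = W.
Proof. destruct g_aut as [Hggi [Hgig _]]. apply (tsum_comp _ w g gi Hggi Hgig summable_w). Qed.

Lemma a_aut q : a (g q) = tsum (restrict (fun p => lt p q) (fun p => w (g p))).
Proof.
  destruct g_aut as [Hggi [Hgig Hg]]. unfold a.
  rewrite <- (tsum_comp _ _ g gi Hggi Hgig (summable_restrict_w _)).
  f_equal. apply functional_extensionality. intros p. unfold restrict.
  destruct (excluded_middle_informative (lt (g p) (g q))) as [Hgpq|Hgpq];
    destruct (excluded_middle_informative (lt p q)) as [Hpq|Hpq]; auto; exfalso.
  - apply Hpq. eapply order_aut_reflect; eauto.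
  - exact (Hgpq (Hg p q Hpq)).
Qed.

Lemma w_aut_mul_phi_bounds q x : 0 <= w (g q) * phi q x <= w (g q).
Proof. pose proof (phi_bounds q x). pose proof (w_pos (g q)). nra. Qed.

Lemma summable_lift_sum x : summable (fun q => w (g q) * phi q x).
Proof. apply (summable_le _ _ _ (fun q => w_aut_mul_phi_bounds q x) summable_w_aut). Qed.

Lemma lift_mono x y : x <= y -> lift g x <= lift g y.
Proof.
  intros Hxy. unfold lift.
  assert (lift_sum g x <= lift_sum g y).
  { apply tsum_le_tsum; [|apply summable_lift_sum]. intros q. split.
    - apply w_aut_mul_phi_bounds.
    - apply Rmult_le_compat_l; [apply w_ge0 | apply phi_mono; auto]. }
  assert (Rmin x 0 <= Rmin y 0) by (apply Rle_min_compat_r; auto).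
  assert (Rmax (x - W) 0 <= Rmax (y - W) 0) by (apply Rle_max_compat_r; lra).
  lra.
Qed.

Lemma lift_low x : x <= 0 -> lift g x = x.
Proof.
  intros Hx. pose proof W_ge0. unfold lift, lift_sum.
  rewrite (tsum_eq0 _ (fun q => w (g q) * phi q x)).
  - rewrite Rmin_left, Rmax_right; lra.
  - intros q. rewrite phi_left; [ring|]. pose proof (a_ge0 q). lra.
Qed.

Lemma lift_high x : W <= x -> lift g x = x.
Proof.
  intros Hx. pose proof W_ge0. unfold lift, lift_sum.
  replace (fun q => w (g q) * phi q x) with (fun q => w (g q)).
  - rewrite tsum_w_aut, Rmin_right, Rmax_left; lra.
  - apply functional_extensionality. intros q.
    rewrite phi_right; [ring|]. pose proof (a_add_w_le_W q). lra.
Qed.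

Lemma lift_range x : 0 <= x <= W -> 0 <= lift g x <= W.
Proof.
  intros Hx.
  pose proof (lift_mono 0 x (proj1 Hx)) as Hlow. pose proof (lift_mono x W (proj2 Hx)) as Hhigh.
  rewrite (lift_low 0) in Hlow by lra. rewrite (lift_high W) in Hhigh by lra. lra.
Qed.

Lemma lift_interval p x : a p <= x <= a p + w p -> lift g x = a (g p) + phi p x * w (g p).
Proof.
  intros Hx. pose proof (a_ge0 p). pose proof (a_add_w_le_W p).
  rewrite lift_in by lra. pose proof (phi_bounds p x). pose proof (w_pos (g p)).
  rewrite a_aut, <- (tsum_single _ p (phi p x * w (g p))) by nra.
  rewrite <- tsum_add.
  - unfold lift_sum. f_equal. apply functional_extensionality. intros q.
    destruct (lt_total q p) as [Hqp|[->|Hpq]].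
    + rewrite restrict_in, single_off by (auto; intros ->; eapply lt_irrefl; eauto).
      pose proof (a_add_w_le q p Hqp). rewrite phi_right; lra.
    + rewrite restrict_out, single_at by apply lt_irrefl. ring.
    + assert (~ lt q p) by (intros Hqp; apply (lt_irrefl q); eauto).
      rewrite restrict_out, single_off by (auto; intros ->; auto).
      pose proof (a_add_w_le p q Hpq). rewrite phi_left; lra.
  - intros q. apply restrict_bounds, w_ge0.
  - intros q. apply single_ge0. nra.
  - apply summable_restrict; [intros; apply w_ge0 | apply summable_w_aut].
  - apply summable_single. nra.
Qed.

Lemma lift_a p : lift g (a p) = a (g p).
Proof.
  pose proof (w_pos p). rewrite (lift_interval p) by lra. rewrite phi_left by lra. ring.
Qed.

Lemma lift_a_add_w p : lift g (a p + w p) = a (g p) + w (g p).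
Proof.
  pose proof (w_pos p). rewrite (lift_interval p) by lra. rewrite phi_right by lra. ring.
Qed.

Lemma phi_lift p x : phi (g p) (lift g x) = phi p x.
Proof.
  destruct (Rle_lt_dec x (a p)) as [Hx|Hx].
  - rewrite (phi_left p x) by auto. apply phi_left. rewrite <- (lift_a p). apply lift_mono. auto.
  - destruct (Rle_lt_dec (a p + w p) x) as [Hx'|Hx'].
    + rewrite (phi_right p x) by auto. apply phi_right.
      rewrite <- (lift_a_add_w p). apply lift_mono. auto.
    + pose proof (phi_bounds p x). pose proof (w_pos (g p)).
      rewrite (lift_interval p x), phi_mid by nra. field. lra.
Qed.

End Automorphism.

Lemma lift_comp g gi h hi x : order_aut lt g gi -> order_aut lt h hi ->
  lift g (lift h x) = lift (fun q => g (h q)) x.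
Proof.
  intros Hg Hh. pose proof (order_aut_comp _ _ _ _ _ _ Hg Hh) as Hgh.
  destruct (Rle_lt_dec x 0) as [Hx|Hx].
  { rewrite (lift_low h x Hx), (lift_low g x Hx), (lift_low _ x Hx). auto. }
  destruct (Rle_lt_dec W x) as [Hx'|Hx'].
  { rewrite (lift_high h hi Hh x Hx'), (lift_high g gi Hg x Hx'), (lift_high _ _ Hgh x Hx').
    auto. }
  pose proof (lift_range h hi Hh x ltac:(lra)) as Hhx.
  rewrite (lift_in (fun q => g (h q)) x), (lift_in g (lift h x)) by lra. unfold lift_sum.
  pose proof Hh as [Hhhi [Hhih _]].
  rewrite <- (tsum_comp _ _ h hi Hhhi Hhih (summable_lift_sum g gi Hg _)).
  f_equal. apply functional_extensionality. intros p. rewrite (phi_lift h hi Hh). auto.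
Qed.

(* The intervals [a q, a q + w q] have disjoint interiors: split [u, v] at the ends of the
   interval of the head [b]; the [phi q] of the other points are constant on the middle piece. *)
Lemma lsum_phi_increment_le l u v : NoDup l -> u <= v ->
  lsum (fun q => w q * (phi q v - phi q u)) l <= v - u.
Proof.
  revert u v. induction l as [|b l IH]; intros u v Hl Huv; simpl; [lra|].
  inversion Hl as [|? ? Hb Hl']; subst.
  pose proof (w_pos b).
  set (u' := Rmin v (Rmax u (a b))). set (v' := Rmin v (Rmax u (a b + w b))).
  assert (Hord : u <= u' <= v' /\ v' <= v) by (unfold u', v'; clamp_cases).
  assert (Hb_u : phi b u' = phi b u).
  { unfold u'. destruct (Rle_dec (a b) u).
    - f_equal. clamp_cases.
    - rewrite !phi_left; clamp_cases. }
  assert (Hb_v : phi b v' = phi b v).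
  { unfold v'. destruct (Rle_dec v (a b + w b)).
    - f_equal. clamp_cases.
    - rewrite !phi_right; clamp_cases. }
  assert (Hoff : forall q, In q l -> phi q v' = phi q u').
  { intros q Hq. assert (q <> b) by (intros ->; contradiction).
    destruct (Rle_dec (a b + w b) u); [f_equal; unfold u', v'; clamp_cases|].
    destruct (Rle_dec v (a b)); [f_equal; unfold u', v'; clamp_cases|].
    rewrite (phi_off q b v'), (phi_off q b u'); auto; unfold u', v'; clamp_cases. }
  assert (Hsplit : lsum (fun q => w q * (phi q v - phi q u)) l
                   <= lsum (fun q => w q * (phi q v - phi q v')) l
                      + lsum (fun q => w q * (phi q u' - phi q u)) l).
  { rewrite <- lsum_add. apply lsum_le. intros q Hq. rewrite Hoff by auto. lra. }
  pose proof (IH v' v Hl' (proj2 Hord)). pose proof (IH u u' Hl' (proj1 (proj1 Hord))).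
  pose proof (w_mul_phi_sub_le b u' v' (proj2 (proj1 Hord))).
  rewrite Hb_u, Hb_v in *. lra.
Qed.

Lemma lift_sum_id x : 0 <= x <= W -> lift_sum (fun q => q) x = x.
Proof.
  intros Hx. unfold lift_sum.
  assert (Hphi0 : forall q, phi q 0 = 0) by (intros q; apply phi_left, a_ge0).
  assert (HphiW : forall q, phi q W = 1) by (intros q; apply phi_right, a_add_w_le_W).
  assert (Hterm : forall q, 0 <= w q * phi q x <= w q)
    by (intros q; pose proof (phi_bounds q x); pose proof (w_pos q); nra).
  assert (Hcoterm : forall q, 0 <= w q * (1 - phi q x) <= w q)
    by (intros q; pose proof (phi_bounds q x); pose proof (w_pos q); nra).
  apply Rle_antisym.
  - apply tsum_le. intros l Hl.
    apply Rle_trans with (lsum (fun q => w q * (phi q x - phi q 0)) l).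
    + apply lsum_le. intros q _. rewrite Hphi0. lra.
    + apply Rle_trans with (x - 0); [apply lsum_phi_increment_le; [exact Hl | lra] | lra].
  - assert (HW : W = tsum (fun q => w q * phi q x) + tsum (fun q => w q * (1 - phi q x))).
    { unfold W. rewrite <- tsum_add.
      - f_equal. apply functional_extensionality. intros q. ring.
      - apply Hterm.
      - apply Hcoterm.
      - exact (summable_le _ _ _ Hterm summable_w).
      - exact (summable_le _ _ _ Hcoterm summable_w). }
    enough (tsum (fun q => w q * (1 - phi q x)) <= W - x) by lra.
    apply tsum_le. intros l Hl.
    apply Rle_trans with (lsum (fun q => w q * (phi q W - phi q x)) l).
    + apply lsum_le. intros q _. rewrite HphiW. lra.
    + apply lsum_phi_increment_le; [exact Hl | lra].
Qed.

Lemma lift_id x : lift (fun q => q) x = x.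
Proof.
  destruct (Rle_lt_dec x 0) as [Hx|Hx]; [apply lift_low; auto|].
  destruct (Rle_lt_dec W x) as [Hx'|Hx']; [apply (lift_high _ _ (order_aut_id _ lt)); auto|].
  rewrite lift_in by lra. apply lift_sum_id. lra.
Qed.

Lemma lift_inv g gi : order_aut lt g gi -> forall x, lift gi (lift g x) = x.
Proof.
  intros Hg x. rewrite (lift_comp gi g g gi) by auto using order_aut_inv.
  destruct Hg as [_ [Hgig _]].
  replace (fun q => gi (g q)) with (fun q : T => q) by (apply functional_extensionality; auto).
  apply lift_id.
Qed.

Lemma lift_incr g gi : order_aut lt g gi -> forall x y, x < y -> lift g x < lift g y.
Proof.
  intros Hg x y Hxy. destruct (lift_mono g gi Hg x y (Rlt_le _ _ Hxy)) as [|E]; auto.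
  apply (f_equal (lift gi)) in E. rewrite !(lift_inv g gi Hg) in E. lra.
Qed.

Lemma lift_inj g gi h hi : order_aut lt g gi -> order_aut lt h hi ->
  (forall x, lift g x = lift h x) -> forall q, g q = h q.
Proof.
  intros Hg Hh Hgh q. apply a_inj.
  rewrite <- (lift_a g gi Hg q), <- (lift_a h hi Hh q). auto.
Qed.

Definition homeo_of_aut g gi (Hg : order_aut lt g gi) : homeo_plus :=
  let Hgi := order_aut_inv _ _ lt_irrefl lt_trans lt_total _ _ Hg in
  HomeoPlus (lift g) (lift gi)
    (increasing_bijection_continuous _ _ (lift_inv g gi Hg) (lift_inv gi g Hgi)
       (lift_incr g gi Hg) (lift_incr gi g Hgi))
    (increasing_bijection_continuous _ _ (lift_inv gi g Hgi) (lift_inv g gi Hg)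
       (lift_incr gi g Hgi) (lift_incr g gi Hg))
    (lift_inv g gi Hg) (lift_inv gi g Hgi) (lift_incr g gi Hg).

End Realization.

Section RightTranslations.
Variable Q : quandle.

Definition rmul (s q : Q) : Q := qop Q q s.

Lemma rdiv_exists (s q : Q) : exists p, qop Q p s = q.
Proof. destruct (qrdiv Q s q) as [p [Hp _]]. eauto. Qed.

Definition rdiv (s q : Q) : Q :=
  proj1_sig (constructive_indefinite_description _ (rdiv_exists s q)).

Lemma rmul_rdiv s q : rmul s (rdiv s q) = q.
Proof. exact (proj2_sig (constructive_indefinite_description _ (rdiv_exists s q))). Qed.

Lemma rdiv_rmul s q : rdiv s (rmul s q) = q.
Proof.
  destruct (qrdiv Q s (rmul s q)) as [p [_ Huniq]].
  rewrite <- (Huniq (rdiv s (rmul s q))), <- (Huniq q); auto. apply rmul_rdiv.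
Qed.

Lemma rmul_conj r s q : rmul (qop Q r s) q = rmul s (rmul r (rdiv s q)).
Proof.
  rewrite <- (rmul_rdiv s q) at 1. unfold rmul. symmetry. apply qrdist.
Qed.

Lemma rmul_order_aut lt s : right_order Q lt -> order_aut lt (rmul s) (rdiv s).
Proof.
  intros (_ & _ & _ & Hright). split; [|split].
  - apply rmul_rdiv.
  - apply rdiv_rmul.
  - intros p q. apply Hright.
Qed.

Lemma rmul_inj : weak_latin Q -> forall r s, (forall q, rmul r q = rmul s q) -> r = s.
Proof. intros Hwl r s Hrs. destruct (Hwl r s) as [qh Hqh]. apply Hqh, Hrs. Qed.

End RightTranslations.

Section QuandleRealization.
Variable Q : quandle.
Variable lt : Q -> Q -> Prop.
Hypothesis lt_right : right_order Q lt.
Variable e : Q -> nat.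
Hypothesis e_inj : forall p q, e p = e q -> p = q.

Let lt_irrefl : forall q, ~ lt q q := proj1 lt_right.
Let lt_trans : forall p q r, lt p q -> lt q r -> lt p r := proj1 (proj2 lt_right).
Let lt_total : forall p q, lt p q \/ p = q \/ lt q p := proj1 (proj2 (proj2 lt_right)).

Let rmul_aut s : order_aut lt (rmul Q s) (rdiv Q s) := rmul_order_aut Q lt s lt_right.
Let rdiv_aut s : order_aut lt (rdiv Q s) (rmul Q s) :=
  order_aut_inv _ _ lt_irrefl lt_trans lt_total _ _ (rmul_aut s).

Definition rho (s : Q) : homeo_plus :=
  homeo_of_aut Q lt lt_irrefl lt_trans lt_total e e_inj _ _ (rmul_aut s).

Lemma rho_inj : weak_latin Q -> forall r s, (forall x, rho r x = rho s x) -> r = s.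
Proof.
  intros Hwl r s Hrs. apply (rmul_inj Q Hwl).
  exact (lift_inj _ _ lt_irrefl lt_trans lt_total _ e_inj _ _ _ _ (rmul_aut r) (rmul_aut s) Hrs).
Qed.

Lemma rho_conj r s x : rho (qop Q r s) x = rho s (rho r (hinv (rho s) x)).
Proof.
  simpl.
  rewrite (lift_comp _ _ lt_irrefl lt_trans lt_total _ e_inj _ _ _ _ _ (rmul_aut r) (rdiv_aut s)).
  rewrite (lift_comp _ _ lt_irrefl lt_trans lt_total _ e_inj _ _ _ _ _ (rmul_aut s)
             (order_aut_comp _ _ _ _ _ _ (rmul_aut r) (rdiv_aut s))).
  f_equal. apply functional_extensionality. apply rmul_conj.
Qed.

End QuandleRealization.

Theorem lemma3p5 (Q : quandle) (lt : Q -> Q -> Prop) :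
  countable Q -> weak_latin Q -> right_order Q lt ->
  exists rho : Q -> homeo_plus,
    (forall r s : Q, (forall x, rho r x = rho s x) -> r = s) /\
    (forall (r s : Q) (x : R),
        rho (qop Q r s) x = rho s (rho r (hinv (rho s) x))).
Proof.
  intros [e He] Hwl Hord.
  exists (rho Q lt Hord e He). split.
  - apply rho_inj, Hwl.
  - apply rho_conj.
Qed.
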